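(* Let $c_1$ be a real constant and $f$ a smooth function of $\theta$ on an interval satisfying $$\sin\theta\Big[\big(3f'+c_1\big)f''-2ff'\Big]+\cos\theta\Big[ff''+4(f')^2+2c_1f'\Big]=0$$ (primes denote $d/d\theta$). In polar coordinates $x=r\cos\theta$, $y=r\sin\theta$ ($r>0$, $\theta$ in that interval), let $V=f'(\theta)/r^2$. Then $$J=p_\theta^2\Big(\cos\theta\,p_r-\sin\theta\,\frac{p_\theta}{r}\Big)+\Big[(2f'+c_1)\cos\theta-f\sin\theta\Big]p_r-\Big[(3f'+c_1)\sin\theta+f\cos\theta\Big]\frac{p_\theta}{r}$$ is a first integral of $\ddot x=-V_{,x}$, $\ddot y=-V_{,y}$, where $p_r=\dot r$ and $p_\theta=r^2\dot\theta$.
   Context: A first integral is a function of $(t,x,y,\dot x,\dot y)$ whose total time derivative vanishes along every solution of the given equations of motion. *)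

From Stdlib Require Import Reals.
From Coquelicot Require Import Coquelicot.
Open Scope R_scope.

Definition in_open (a b : Rbar) (s : R) : Prop := Rbar_lt a s /\ Rbar_lt s b.

Definition smooth_on (a b : Rbar) (f : R -> R) : Prop :=
  forall (n : nat) (s : R), in_open a b s -> ex_derive (Derive_n f n) s.

Definition Vpol (f : R -> R) (r th : R) : R := Derive f th / r ^ 2.

(* Cartesian gradient of V at the point x = r cos th, y = r sin th, via the
   polar chain rule: d/dx = cos th d/dr - (sin th / r) d/dth,
                     d/dy = sin th d/dr + (cos th / r) d/dth. *)
Definition Vx (f : R -> R) (r th : R) : R :=
  cos th * Derive (fun s => Vpol f s th) r - sin th / r * Derive (fun s => Vpol f r s) th.
Definition Vy (f : R -> R) (r th : R) : R :=
  sin th * Derive (fun s => Vpol f s th) r + cos th / r * Derive (fun s => Vpol f r s) th.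

Definition Jval (f : R -> R) (c1 r th pr pth : R) : R :=
  pth ^ 2 * (cos th * pr - sin th * pth / r)
  + ((2 * Derive f th + c1) * cos th - f th * sin th) * pr
  - ((3 * Derive f th + c1) * sin th + f th * cos th) * pth / r.

Definition f_ode (f : R -> R) (c1 th : R) : Prop :=
  let f1 := Derive f th in
  let f2 := Derive_n f 2 th in
  sin th * ((3 * f1 + c1) * f2 - 2 * f th * f1)
  + cos th * (f th * f2 + 4 * f1 ^ 2 + 2 * c1 * f1) = 0.

(* In polar coordinates the motion is the Hamiltonian flow
     r' = p_r,  th' = p_th / r^2,  p_r' = p_th^2 / r^3 - dV/dr,  p_th' = - dV/dth,
   and for V = f'(th) / r^2 the derivative of J along this flow is the left-hand side
   of the ODE for f divided by r^3.  The only analytic point is to read off r' and th'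
   from the Cartesian motion: r = sqrt (x^2 + y^2), while th is locally a branch of
   asin, which is where the continuity of th is used. *)

From Stdlib Require Import Reals Lra.
From Coquelicot Require Import Coquelicot.
Open Scope R_scope.

Lemma in_open_open (a b : Rbar) : open (in_open a b).
Proof. apply open_and; [apply open_Rbar_gt | apply open_Rbar_lt]. Qed.

Lemma is_derive_asin_0 : is_derive asin 0 1.
Proof.
  apply is_derive_Reals.
  assert (H01 : -1 < 0 < 1) by lra.
  apply derive_pt_eq_1 with (pr := derivable_pt_asin 0 H01).
  rewrite derive_pt_asin, Rsqr_0, Rminus_0_r, sqrt_1. field.
Qed.

Lemma polar_sq_norm (rho a : R) : (rho * cos a) ^ 2 + (rho * sin a) ^ 2 = rho ^ 2.
Proof. pose proof (sin2_cos2 a) as Hsc. unfold Rsqr in Hsc. nra. Qed.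

(* [auto_derive] leaves eta-expanded [Derive (fun u => h u)], which [ring] and [field]
   would treat as atoms distinct from [Derive h]. *)
Ltac eta_Derive := repeat match goal with
  | |- context [Derive (fun u => ?h u) ?p] => change (Derive (fun u => h u) p) with (Derive h p)
  end.

Section PolarChart.

Variables (I : R -> Prop) (x y r th : R -> R).
Hypothesis HI : open I.
Hypothesis Hr : forall t, I t -> 0 < r t.
Hypothesis Hx : forall t, I t -> x t = r t * cos (th t).
Hypothesis Hy : forall t, I t -> y t = r t * sin (th t).
Hypothesis Hdx : forall t, I t -> ex_derive x t /\ ex_derive (Derive x) t.
Hypothesis Hdy : forall t, I t -> ex_derive y t /\ ex_derive (Derive y) t.
Hypothesis Hthc : forall t, I t -> continuous th t.

Definition radial_momentum (s : R) : R :=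
  Derive x s * cos (th s) + Derive y s * sin (th s).
Definition angular_momentum (s : R) : R :=
  r s * (Derive y s * cos (th s) - Derive x s * sin (th s)).

Lemma is_derive_radius s : I s -> is_derive r s (radial_momentum s).
Proof.
  intros Is.
  assert (Hrs := Hr s Is).
  apply is_derive_ext_loc with (f := fun u => sqrt (x u ^ 2 + y u ^ 2)).
  { apply filter_imp with (2 := HI s Is); intros u Iu.
    rewrite Hx, Hy, polar_sq_norm by exact Iu. apply sqrt_pow2, Rlt_le, Hr, Iu. }
  assert (Hq : x s ^ 2 + y s ^ 2 = r s ^ 2)
    by (rewrite Hx, Hy by exact Is; apply polar_sq_norm).
  assert (Dq : is_derive (fun u => x u ^ 2 + y u ^ 2) s
                 (2 * x s * Derive x s + 2 * y s * Derive y s)).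
  { destruct (Hdx s Is), (Hdy s Is).
    auto_derive; [tauto | eta_Derive; ring]. }
  assert (Dsqrt := is_derive_sqrt _ _ _ Dq).
  cbv beta in Dsqrt; rewrite Hq, sqrt_pow2 in Dsqrt by lra.
  replace (radial_momentum s)
    with ((2 * x s * Derive x s + 2 * y s * Derive y s) / (2 * r s)).
  - apply Dsqrt. nra.
  - unfold radial_momentum. rewrite Hx, Hy by exact Is. field. lra.
Qed.

Lemma is_derive_angle s : I s -> is_derive th s (angular_momentum s / r s ^ 2).
Proof.
  intros Is.
  assert (Hrs := Hr s Is).
  set (a := th s).
  (* Near s, continuity keeps th within pi/2 of a, so th = a + asin (sin (th - a)),
     and sin (th - a) = (y cos a - x sin a) / r is differentiable. *)
  set (g := fun u => (y u * cos a - x u * sin a) / r u).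
  assert (Hga : g s = 0) by (unfold g, a; rewrite Hx, Hy by exact Is; field; lra).
  assert (Dg : is_derive g s (angular_momentum s / r s ^ 2)).
  { destruct (Hdx s Is), (Hdy s Is).
    assert (Dr := is_derive_radius s Is).
    unfold g. auto_derive.
    - repeat split; auto; [eexists; exact Dr | lra].
    - eta_Derive. rewrite (is_derive_unique _ _ _ Dr).
      unfold angular_momentum, radial_momentum, a.
      rewrite Hx, Hy by exact Is. field. lra. }
  apply is_derive_ext_loc with (f := fun u => a + asin (g u)).
  - assert (Hnear : locally s (fun u => ball a (mkposreal (PI/2) PI2_RGT_0) (th u)))
      by exact (proj1 (filterlim_locally th a) (Hthc s Is) _).
    apply filter_imp with (2 := filter_and _ _ (HI s Is) Hnear).
    intros u [Iu Bu].
    change (Rabs (th u - a) < PI/2) in Bu. apply Rabs_def2 in Bu.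
    assert (Hgu : g u = sin (th u - a)).
    { unfold g. rewrite Hx, Hy, sin_minus by exact Iu. field.
      apply Rgt_not_eq, Hr, Iu. }
    rewrite Hgu, asin_sin by lra. lra.
  - assert (Dasin : is_derive asin (g s) 1) by (rewrite Hga; exact is_derive_asin_0).
    replace (angular_momentum s / r s ^ 2)
      with (plus zero (scal (angular_momentum s / r s ^ 2) 1))
      by (rewrite plus_zero_l; apply Rmult_1_r).
    exact (is_derive_plus _ _ s _ _ (is_derive_const a s) (is_derive_comp _ _ s _ _ Dasin Dg)).
Qed.

Lemma is_derive_radial_momentum s ar : I s ->
  Derive_n x 2 s * cos (th s) + Derive_n y 2 s * sin (th s) = ar ->
  is_derive radial_momentum s (angular_momentum s ^ 2 / r s ^ 3 + ar).
Proof.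
  intros Is Har.
  change (Derive_n ?h 2 s) with (Derive (Derive h) s) in Har.
  assert (Hrs := Hr s Is).
  assert (Dth := is_derive_angle s Is).
  destruct (Hdx s Is), (Hdy s Is).
  unfold radial_momentum. auto_derive.
  - repeat split; auto; eexists; exact Dth.
  - eta_Derive. rewrite (is_derive_unique _ _ _ Dth), <- Har.
    unfold angular_momentum. field. lra.
Qed.

Lemma is_derive_angular_momentum s ath : I s ->
  Derive_n y 2 s * cos (th s) - Derive_n x 2 s * sin (th s) = ath ->
  is_derive angular_momentum s (r s * ath).
Proof.
  intros Is Hath.
  change (Derive_n ?h 2 s) with (Derive (Derive h) s) in Hath.
  assert (Hrs := Hr s Is).
  assert (Dr := is_derive_radius s Is).
  assert (Dth := is_derive_angle s Is).
  destruct (Hdx s Is), (Hdy s Is).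
  unfold angular_momentum. auto_derive.
  - repeat split; auto; eexists; first [exact Dr | exact Dth].
  - eta_Derive.
    rewrite (is_derive_unique _ _ _ Dr), (is_derive_unique _ _ _ Dth), <- Hath.
    unfold angular_momentum, radial_momentum. field. lra.
Qed.

End PolarChart.

Lemma Derive_Vpol_r (f : R -> R) (rho a : R) : rho <> 0 ->
  Derive (fun s => Vpol f s a) rho = -2 * Derive f a / rho ^ 3.
Proof.
  intros Hrho. apply is_derive_unique. unfold Vpol. auto_derive.
  - rewrite Rmult_1_r. now apply Rmult_integral_contrapositive_currified.
  - field. exact Hrho.
Qed.

Lemma Derive_Vpol_th (f : R -> R) (rho a : R) :
  Derive (fun s => Vpol f rho s) a = Derive_n f 2 a / rho ^ 2.
Proof. apply Derive_scal_l. Qed.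

Lemma radial_force (f : R -> R) (rho a : R) : rho <> 0 ->
  - Vx f rho a * cos a - Vy f rho a * sin a = 2 * Derive f a / rho ^ 3.
Proof.
  intros Hrho. pose proof (sin2_cos2 a) as Hsc. unfold Rsqr in Hsc.
  unfold Vx, Vy. rewrite Derive_Vpol_r, Derive_Vpol_th by exact Hrho.
  transitivity (2 * Derive f a / rho ^ 3 * (sin a * sin a + cos a * cos a)).
  - field. exact Hrho.
  - rewrite Hsc. ring.
Qed.

Lemma angular_force (f : R -> R) (rho a : R) : rho <> 0 ->
  - Vy f rho a * cos a + Vx f rho a * sin a = - Derive_n f 2 a / rho ^ 3.
Proof.
  intros Hrho. pose proof (sin2_cos2 a) as Hsc. unfold Rsqr in Hsc.
  unfold Vx, Vy. rewrite Derive_Vpol_r, Derive_Vpol_th by exact Hrho.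
  transitivity (- Derive_n f 2 a / rho ^ 3 * (sin a * sin a + cos a * cos a)).
  - field. exact Hrho.
  - rewrite Hsc. ring.
Qed.

Lemma is_derive_Jval_polar_flow (f : R -> R) (c1 : R) (r th P Q : R -> R) (t : R) :
  r t <> 0 -> ex_derive f (th t) -> ex_derive (Derive f) (th t) -> f_ode f c1 (th t) ->
  is_derive r t (P t) -> is_derive th t (Q t / r t ^ 2) ->
  is_derive P t (Q t ^ 2 / r t ^ 3 + 2 * Derive f (th t) / r t ^ 3) ->
  is_derive Q t (r t * (- Derive_n f 2 (th t) / r t ^ 3)) ->
  is_derive (fun s => Jval f c1 (r s) (th s) (P s) (Q s)) t 0.
Proof.
  intros Hrt Ef Ef' Hode Dr Dth DP DQ.
  unfold Jval. auto_derive.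
  - repeat split; try assumption; eexists; eassumption.
  - eta_Derive.
    rewrite (is_derive_unique _ _ _ Dr), (is_derive_unique _ _ _ Dth),
      (is_derive_unique _ _ _ DP), (is_derive_unique _ _ _ DQ).
    change (Derive (Derive f) (th t)) with (Derive_n f 2 (th t)).
    unfold f_ode in Hode; cbv zeta in Hode.
    (* The derivative of J is exactly the left-hand side of the ODE divided by r^3. *)
    rewrite <- (Rdiv_0_l (r t ^ 3)), <- Hode. field. exact Hrt.
Qed.

Theorem mainTheorem14
  (c1 : R) (a b : Rbar) (f : R -> R)
  (Hsmooth : smooth_on a b f)
  (Hode : forall th, in_open a b th -> f_ode f c1 th)
  (t0 t1 : Rbar) (x y r th : R -> R)
  (* the trajectory stays in the polar chart: r > 0, theta in (a,b), theta continuous *)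
  (Hr : forall t, in_open t0 t1 t -> 0 < r t)
  (Hth : forall t, in_open t0 t1 t -> in_open a b (th t))
  (Hthc : forall t, in_open t0 t1 t -> continuous th t)
  (Hx : forall t, in_open t0 t1 t -> x t = r t * cos (th t))
  (Hy : forall t, in_open t0 t1 t -> y t = r t * sin (th t))
  (* (x,y) solves x'' = -V_x, y'' = -V_y on the time interval *)
  (Hdx : forall t, in_open t0 t1 t -> ex_derive x t /\ ex_derive (Derive x) t)
  (Hdy : forall t, in_open t0 t1 t -> ex_derive y t /\ ex_derive (Derive y) t)
  (Hmx : forall t, in_open t0 t1 t -> Derive_n x 2 t = - Vx f (r t) (th t))
  (Hmy : forall t, in_open t0 t1 t -> Derive_n y 2 t = - Vy f (r t) (th t)) :
  forall t, in_open t0 t1 t ->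
    is_derive
      (fun s => Jval f c1 (r s) (th s) (Derive r s) (r s ^ 2 * Derive th s)) t 0.
Proof.
  intros t Ht.
  pose proof (in_open_open t0 t1) as HI.
  pose proof (is_derive_radius _ x y r th HI Hr Hx Hy Hdx Hdy) as Dr.
  pose proof (is_derive_angle _ x y r th HI Hr Hx Hy Hdx Hdy Hthc) as Dth.
  assert (Hrt : r t <> 0) by exact (Rgt_not_eq _ _ (Hr t Ht)).
  assert (HT := Hth t Ht).
  apply is_derive_ext_loc
    with (f := fun s => Jval f c1 (r s) (th s) (radial_momentum x y th s)
                                           (angular_momentum x y r th s)).
  { apply filter_imp with (2 := HI t Ht); intros u Iu.
    rewrite (is_derive_unique _ _ _ (Dr u Iu)), (is_derive_unique _ _ _ (Dth u Iu)).
    f_equal. field. apply Rgt_not_eq, Hr, Iu. }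
  apply is_derive_Jval_polar_flow; auto.
  - exact (Hsmooth 0%nat _ HT).
  - exact (Hsmooth 1%nat _ HT).
  - apply (is_derive_radial_momentum _ x y r th HI Hr Hx Hy Hdx Hdy Hthc t _ Ht).
    rewrite Hmx, Hmy by exact Ht. pose proof (radial_force f (r t) (th t) Hrt). lra.
  - apply (is_derive_angular_momentum _ x y r th HI Hr Hx Hy Hdx Hdy Hthc t _ Ht).
    rewrite Hmx, Hmy by exact Ht. pose proof (angular_force f (r t) (th t) Hrt). lra.
Qed.
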